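(* Fix $k\in\mathbb{Z}_{\ge1}$. Let $\sigma\in\mathrm{Av}(312)$ with $|\sigma|\ge k$ and $\mathrm{en}_k(\sigma)=\pi$, where $\pi\in\mathrm{Av}_k(312)$. Let $\pi'\in\mathrm{Av}_k(312)$ be such that $\mathrm{pat}_{\{1,\dots,k-1\}}(\pi')=\mathrm{pat}_{\{2,\dots,k\}}(\pi)$ (i.e. the edge $\pi'$ of $\mathcal{O}v(k,\mathrm{Av}(312))$ starts where the edge $\pi$ ends). Then there exists $\ell\in[|\sigma|+1]$ such that $\sigma^{*\ell}\in\mathrm{Av}(312)$ and $\mathrm{en}_k(\sigma^{*\ell})=\pi'$.
   Context: For $I=\{i_1<\dots<i_m\}$, $\mathrm{pat}_I(\sigma)=\mathrm{std}(\sigma(i_1),\dots,\sigma(i_m))$, where for distinct reals $x_1,\dots,x_m$, $\mathrm{std}(x_1,\dots,x_m)$ is the unique permutation $\pi$ of $[m]$ with $\pi(i)<\pi(j)\iff x_i<x_j$. $\mathrm{en}_k(\sigma)=\mathrm{pat}_{\{|\sigma|-k+1,\dots,|\sigma|\}}(\sigma)$. $\mathrm{Av}(312)$ is the set of permutations $\sigma$ with no $I$ such that $\mathrm{pat}_I(\sigma)=312$, and $\mathrm{Av}_k(312)$ those of size $k$. For $\sigma\in\mathcal S_n$ and $\ell\in[n+1]$, $\sigma^{*\ell}=\mathrm{std}(\sigma(1),\dots,\sigma(n),\ell-1/2)\in\mathcal S_{n+1}$ (append a final value $\ell$, shifting up by one all earlier values $\ge\ell$). The overlap graph $\mathcal{O}v(k,\mathrm{Av}(312))$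 has vertex set $\mathrm{Av}_{k-1}(312)$ and, for each $\pi\in\mathrm{Av}_k(312)$, an edge labelled $\pi$ from $\mathrm{pat}_{\{1,\dots,k-1\}}(\pi)$ to $\mathrm{pat}_{\{2,\dots,k\}}(\pi)$. *)

From mathcomp Require Import all_boot.
Set Implicit Arguments. Unset Strict Implicit. Unset Printing Implicit Defensive.

(* Permutations of [n] are represented as sequences of naturals (one-line
   notation, values 1..n, positions 1..n). *)

Definition is_perm (s : seq nat) : bool := perm_eq s (iota 1 (size s)).

(* std(x_1,...,x_m): the permutation of [m] order-isomorphic to a sequence of
   distinct naturals; the i-th entry is the rank (1-based) of x_i. *)
Definition std (s : seq nat) : seq nat :=
  [seq (count (fun y => y < x) s).+1 | x <- s].

Definition index_set (n : nat) (I : seq nat) : bool :=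
  sorted ltn I && all (fun i => (1 <= i) && (i <= n)) I.

(* pat_I(sigma), positions 1-based *)
Definition pat (I : seq nat) (sigma : seq nat) : seq nat :=
  std [seq nth 0 sigma i.-1 | i <- I].

Definition en (k : nat) (sigma : seq nat) : seq nat :=
  pat (iota (size sigma - k).+1 k) sigma.

Definition avoids312 (sigma : seq nat) : Prop :=
  forall I, index_set (size sigma) I -> pat I sigma <> [:: 3; 1; 2].

Definition Av312 (sigma : seq nat) : Prop := is_perm sigma /\ avoids312 sigma.

Definition Av312_k (k : nat) (sigma : seq nat) : Prop :=
  size sigma = k /\ Av312 sigma.

(* sigma^{*l} = std(sigma(1),...,sigma(n), l - 1/2); computed after doubling
   all values: std(2 sigma(1), ..., 2 sigma(n), 2l - 1). *)
Definition ext (sigma : seq nat) (l : nat) : seq nat :=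
  std (rcons [seq x.*2 | x <- sigma] (l.*2).-1).

From mathcomp Require Import all_boot zify.
Set Implicit Arguments. Unset Strict Implicit.

(* Let n = |sigma|, let the last entry of pi' be r, and let w = n - (k - 1)
   be the (0-based) start of the last k - 1 entries of sigma, which by the
   overlap hypothesis are order-isomorphic to the first k - 1 entries of pi'.
   Because pi' avoids 312, its entries below r are exactly its first r - 1
   entries (an entry above r followed by one below r would make a 312 with r).
   Transported to sigma, and using that sigma avoids 312, this forces the
   first w + r - 1 entries of sigma to lie below all later ones, i.e. to be
   the values 1, ..., w + r - 1.  Appending l = w + r (or l = 1 if r = 1)
   then creates no 312 and makes the last k entries a copy of pi'. *)

Lemma count_idx (p : pred nat) (s : seq nat) :
  count p s = count (fun j => p (nth 0 s j)) (iota 0 (size s)).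
Proof. by rewrite -{1}(mkseq_nth 0 s) /mkseq count_map. Qed.

Lemma count_in_predT (p : pred nat) (s : seq nat) :
  {in s, forall x, p x} -> count p s = size s.
Proof. by move=> ps; apply/eqP; rewrite -all_count; apply/allP. Qed.

Lemma count_in_pred0 (p : pred nat) (s : seq nat) :
  {in s, forall x, ~~ p x} -> count p s = 0.
Proof.
move=> ps; apply/eqP; rewrite -leqn0 leqNgt -has_count.
by apply/hasP => -[x /ps /negP].
Qed.

Lemma count_iota_lt a m x : a <= x <= a + m ->
  count (fun y => y < x) (iota a m) = x - a.
Proof.
move=> xa; have -> : m = (x - a) + (a + m - x) by lia.
rewrite iotaD count_cat count_in_predT ?size_iota; last first.
  by move=> y; rewrite mem_iota; lia.
by rewrite count_in_pred0 ?addn0 // => y; rewrite mem_iota; lia.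
Qed.

Lemma count_lt_mono (s : seq nat) a b : a <= b ->
  count (fun y => y < a) s <= count (fun y => y < b) s.
Proof. by move=> ab; apply: sub_count => y /=; lia. Qed.

Lemma count_lt_strict (s : seq nat) a b : a < b -> a \in s ->
  count (fun y => y < a) s < count (fun y => y < b) s.
Proof.
elim: s => //= x s IH ab; rewrite in_cons => /orP[/eqP <-|a_in].
  by have := count_lt_mono s (ltnW ab); rewrite ltnn ab /=; lia.
have := IH ab a_in; case: (ltnP x a) => xa; first by have -> : x < b by lia.
by case: (x < b); lia.
Qed.

Lemma downclosed_count (P : pred nat) m :
  (forall i j, i < j -> j < m -> P j -> P i) ->
  forall i, i < m -> P i = (i < count P (iota 0 m)).
Proof.
move=> down i im; case: (boolP (P i)) => Pi.
  have -> : m = i.+1 + (m - i.+1) by lia.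
  rewrite iotaD count_cat count_in_predT ?size_iota; first lia.
  move=> y; rewrite mem_iota => yi.
  have [yi'|-> //] : y < i \/ y = i by lia.
  exact: (down y i).
have -> : m = i + (m - i) by lia.
rewrite iotaD count_cat (@count_in_pred0 _ (iota (0 + i) _)).
  by have := count_size P (iota 0 i); rewrite size_iota; lia.
move=> y; rewrite mem_iota => yi; apply: contra Pi => Py.
have [<- //|iy] : y = i \/ i < y by lia.
by apply: (down i y) => //; lia.
Qed.

Lemma size_std (s : seq nat) : size (std s) = size s.
Proof. exact: size_map. Qed.

Lemma nth_std (s : seq nat) i : i < size s ->
  nth 0 (std s) i = (count (fun y => y < nth 0 s i) s).+1.
Proof. by move=> si; rewrite (nth_map 0). Qed.

Lemma std_lt (s : seq nat) i j : i < size s -> j < size s ->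
  (nth 0 (std s) i < nth 0 (std s) j) = (nth 0 s i < nth 0 s j).
Proof.
move=> si sj; rewrite !nth_std // ltnS.
case: (ltnP (nth 0 s i) (nth 0 s j)) => h; first exact/count_lt_strict/mem_nth.
by apply/negbTE; rewrite -leqNgt; apply: count_lt_mono.
Qed.

Lemma std_eq (s t : seq nat) : size s = size t ->
  (forall i j, i < size s -> j < size s ->
     (nth 0 s i < nth 0 s j) = (nth 0 t i < nth 0 t j)) ->
  std s = std t.
Proof.
move=> st H; apply: (@eq_from_nth _ 0); rewrite ?size_std // => i si.
rewrite !nth_std -?st // count_idx [in RHS]count_idx -st.
by congr S; apply: eq_in_count => j; rewrite mem_iota add0n => sj; rewrite H.
Qed.

Lemma perm_nth_range (s : seq nat) i : is_perm s -> i < size s ->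
  1 <= nth 0 s i <= size s.
Proof.
move=> sp si; have := mem_nth 0 si.
by rewrite (perm_mem sp) mem_iota add1n ltnS.
Qed.

Lemma is_perm_uniq (s : seq nat) : is_perm s -> uniq s.
Proof. by move=> /perm_uniq ->; apply: iota_uniq. Qed.

Lemma perm_count_lt (s : seq nat) x : is_perm s -> 1 <= x <= (size s).+1 ->
  count (fun y => y < x) s = x - 1.
Proof. by move=> /permP -> xs; rewrite count_iota_lt //; lia. Qed.

Lemma std_perm (s : seq nat) : is_perm s -> std s = s.
Proof.
move=> sp; apply: (@eq_from_nth _ 0); rewrite ?size_std // => i si.
have := perm_nth_range sp si => sr.
by rewrite nth_std // perm_count_lt //; lia.
Qed.

Lemma std_uniq_perm (t : seq nat) : uniq t -> is_perm (std t).
Proof.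
move=> ut; have ust : uniq (std t).
  apply/(uniqP 0) => i j; rewrite !inE size_std => ti tj e.
  apply/eqP; rewrite -(nth_uniq 0 ti tj ut).
  by have := std_lt ti tj; have := std_lt tj ti; rewrite e ltnn; case: ltngtP.
apply: uniq_perm => //; first exact: iota_uniq.
have sub : {subset std t <= iota 1 (size (std t))}.
  move=> x /(nthP 0) [i ti <-]; rewrite size_std in ti *.
  rewrite mem_iota nth_std //.
  have := count_predC (fun y => y < nth 0 t i) t.
  have : 0 < count (predC (fun y => y < nth 0 t i)) t.
    rewrite -has_count; apply/hasP; exists (nth 0 t i).
      exact: mem_nth.
    by rewrite /= ltnn.
  lia.
by have [] := uniq_min_size ust sub; rewrite // size_iota.
Qed.

Definition no312 (s : seq nat) : Prop :=
  forall i j h, i < j -> j < h -> h < size s ->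
  ~~ ((nth 0 s j < nth 0 s h) && (nth 0 s h < nth 0 s i)).

Lemma std3 (x y z : nat) : (std [:: x; y; z] == [:: 3; 1; 2]) = (y < z < x).
Proof.
rewrite /std /=.
case: (ltngtP x y); case: (ltngtP y z); case: (ltngtP x z) => //=; try lia.
all: by rewrite ?ltnn.
Qed.

Lemma avoids312E (s : seq nat) : avoids312 s <-> no312 s.
Proof.
split=> [A i j h ij jh hs|A I I_ok].
  apply/negP => /andP[jh' hi]; apply: (A [:: i.+1; j.+1; h.+1]).
    by rewrite /index_set /=; lia.
  by apply/eqP; rewrite /pat /= std3 jh' hi.
case: I I_ok => [|a [|b [|c [|]]]] //; rewrite /index_set /pat /= => I_ok.
move/eqP; rewrite std3 => /andP[bc ca].
have [ab [bc' cs]] : a.-1 < b.-1 /\ b.-1 < c.-1 /\ c.-1 < size s by lia.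
by have := A _ _ _ ab bc' cs; rewrite bc ca.
Qed.

(* In a 312-avoiding permutation t of [m + 1] with last entry r, the entries
   smaller than r occupy exactly the first r - 1 positions: an entry above r
   followed by one below r would form a 312 with the last entry. *)
Lemma no312_below_last (t : seq nat) m i :
  is_perm t -> no312 t -> size t = m.+1 -> i < m ->
  (nth 0 t i < nth 0 t m) = (i < (nth 0 t m).-1).
Proof.
move=> tp tav tm im; have mt : m < size t by rewrite tm.
have r_range := perm_nth_range tp mt.
have down : forall i' j, i' < j -> j < m ->
    nth 0 t j < nth 0 t m -> nth 0 t i' < nth 0 t m.
  move=> i' j ij jm jr; rewrite ltnNge; apply/negP => ri'.
  have ri'_neq : nth 0 t i' != nth 0 t m.
    by rewrite nth_uniq ?is_perm_uniq ?tm //; try apply/eqP; lia.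
  by have := tav i' j m ij jm mt; rewrite jr /= ltn_neqAle eq_sym ri'_neq ri'.
have count_below :
    count (fun j => nth 0 t j < nth 0 t m) (iota 0 m) = (nth 0 t m).-1.
  have := perm_count_lt (x := nth 0 t m) tp ltac:(lia).
  rewrite count_idx tm -addn1.
  by rewrite iotaD count_cat /= add0n ltnn; lia.
by rewrite (downclosed_count down) // count_below.
Qed.

Lemma no312_split (s : seq nat) m : no312 s -> uniq s ->
  (forall h, m < h -> h < size s -> nth 0 s m < nth 0 s h) ->
  forall j h, j <= m -> m < h -> h < size s -> nth 0 s j < nth 0 s h.
Proof.
move=> sav us m_below j h jm mh hs.
have [->|jm'] := eqVneq j m; first exact: m_below.
have j_lt_m : j < m by rewrite ltn_neqAle jm' jm.
have := sav j m h j_lt_m mh hs; rewrite m_below //= -leqNgt leq_eqVlt.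
have j_lt_size : j < size s by rewrite (ltn_trans j_lt_m) // (ltn_trans mh).
by rewrite nth_uniq ?(ltn_eqF (ltn_trans j_lt_m mh)).
Qed.

Lemma perm_prefix_small (s : seq nat) t : is_perm s -> t <= size s ->
  (forall j h, j < t -> t <= h -> h < size s -> nth 0 s j < nth 0 s h) ->
  forall j, j < size s -> (nth 0 s j <= t) = (j < t).
Proof.
move=> sp ts sep j js; have sj := perm_nth_range sp js.
have := perm_count_lt sp (x := nth 0 s j); rewrite count_idx.
have -> : size s = t + (size s - t) by lia.
rewrite iotaD count_cat add0n -(subnKC ts) addKn => /(_ ltac:(lia)).
case: (ltnP j t) => jt.
  rewrite [X in _ + X]count_in_pred0; last first.
    by move=> y; rewrite mem_iota -leqNgt => yt; apply/ltnW/sep; lia.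
  have := count_predC (fun y => nth 0 s y < nth 0 s j) (iota 0 t).
  have : 0 < count (predC (fun y => nth 0 s y < nth 0 s j)) (iota 0 t).
    by rewrite -has_count; apply/hasP; exists j; rewrite ?mem_iota //= ltnn.
  rewrite size_iota; lia.
rewrite [X in X + _]count_in_predT ?size_iota; first lia.
by move=> y; rewrite mem_iota => yt; apply: sep; lia.
Qed.

Lemma nth_window (s : seq nat) a m i : i < m ->
  nth 0 [seq nth 0 s j.-1 | j <- iota a.+1 m] i = nth 0 s (a + i).
Proof. by move=> im; rewrite (nth_map 0) ?size_iota // nth_iota. Qed.

Lemma pat_window_lt (s : seq nat) a m i j : i < m -> j < m ->
  (nth 0 (pat (iota a.+1 m) s) i < nth 0 (pat (iota a.+1 m) s) j) =
  (nth 0 s (a + i) < nth 0 s (a + j)).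
Proof.
by move=> im jm; rewrite /pat std_lt ?size_map ?size_iota // !nth_window.
Qed.

Lemma pat_window_eq (s t : seq nat) a m : is_perm t -> size t = m ->
  (forall i j, i < m -> j < m ->
     (nth 0 s (a + i) < nth 0 s (a + j)) = (nth 0 t i < nth 0 t j)) ->
  pat (iota a.+1 m) s = t.
Proof.
move=> tp tm iso; rewrite -(std_perm tp) /pat.
apply: std_eq; rewrite ?size_map ?size_iota // => i j im jm.
by rewrite !nth_window // iso.
Qed.

Lemma size_ext (s : seq nat) l : size (ext s l) = (size s).+1.
Proof. by rewrite /ext size_std size_rcons size_map. Qed.

Lemma nth_ext (s : seq nat) l i : is_perm s -> 1 <= l <= (size s).+1 ->
  i < size s -> nth 0 (ext s l) i = nth 0 s i + (l <= nth 0 s i).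
Proof.
move=> sp l_range si; have si_range := perm_nth_range sp si.
rewrite /ext nth_std ?size_rcons ?size_map; last by lia.
rewrite nth_rcons size_map si (nth_map 0) // -cats1 count_cat count_map /=.
have -> : count (preim double (fun y => y < (nth 0 s i).*2)) s =
          count (fun y => y < nth 0 s i) s.
  by apply: eq_count => y /=; rewrite ltn_double.
by rewrite perm_count_lt //; [case: (leqP l (nth 0 s i)) => /=; lia | lia].
Qed.

Lemma last_ext (s : seq nat) l : is_perm s -> 1 <= l <= (size s).+1 ->
  nth 0 (ext s l) (size s) = l.
Proof.
move=> sp l_range; rewrite /ext nth_std ?size_rcons ?size_map //.
rewrite nth_rcons size_map ltnn eqxx -cats1 count_cat /= ltnn addn0 count_map.
have -> : count (preim double (fun y => y < (l.*2).-1)) s =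
          count (fun y => y < l) s.
  by apply: eq_count => y /=; lia.
by rewrite perm_count_lt //; lia.
Qed.

Lemma ext_perm (s : seq nat) l : is_perm s -> 1 <= l -> is_perm (ext s l).
Proof.
move=> sp l_gt0; apply: std_uniq_perm.
rewrite rcons_uniq map_inj_uniq ?is_perm_uniq //; last exact: double_inj.
by rewrite andbT; apply/mapP => -[y _]; lia.
Qed.

Lemma shift_lt l x y : (x + (l <= x) < y + (l <= y)) = (x < y).
Proof. by case: (leqP l x); case: (leqP l y) => /= *; lia. Qed.

Lemma shift_lt_l l x : (x + (l <= x) < l) = (x < l).
Proof. by case: (leqP l x) => /= *; lia. Qed.

Lemma l_lt_shift l x : (l < x + (l <= x)) = (l <= x).
Proof. by case: (leqP l x) => /= *; lia. Qed.

(* Once an entry of s is at least l, so are all later entries; this is what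
   excludes a 312 ending at the appended entry l. *)
Definition tail_above (s : seq nat) (l : nat) : Prop :=
  forall i j, i < j -> j < size s -> l <= nth 0 s i -> l <= nth 0 s j.

Lemma ext_Av312 (s : seq nat) l : Av312 s -> 1 <= l <= (size s).+1 ->
  tail_above s l -> Av312 (ext s l).
Proof.
move=> [sp /avoids312E sav] l_range above.
split; first by apply: ext_perm; lia.
apply/avoids312E => i j h ij jh; rewrite size_ext ltnS => hs.
have [hs'|hs'] : h < size s \/ h = size s by lia.
  by rewrite !nth_ext ?shift_lt //; [apply: sav | lia | lia].
subst h.
rewrite last_ext // !nth_ext // ?shift_lt_l ?l_lt_shift; try lia.
by apply/negP => /andP[jl li]; have := above i j ij jh li; rewrite leqNgt jl.
Qed.

Section FittingValue.

Variables (k : nat) (sigma tau : seq nat).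
Hypothesis k_gt0 : 0 < k.
Hypothesis k_le_size : k <= size sigma.
Hypothesis sigma_perm : is_perm sigma.
Hypothesis sigma_av : no312 sigma.
Hypothesis tau_size : size tau = k.
Hypothesis tau_perm : is_perm tau.
Hypothesis tau_av : no312 tau.

Local Notation w := (size sigma - k.-1).
Local Notation r := (nth 0 tau k.-1).

Hypothesis tau_window : forall i j, i < k.-1 -> j < k.-1 ->
  (nth 0 tau i < nth 0 tau j) = (nth 0 sigma (w + i) < nth 0 sigma (w + j)).

Definition fits (l : nat) : Prop :=
  forall i, i < k.-1 -> (nth 0 sigma (w + i) < l) = (nth 0 tau i < r).

Lemma en_ext_fits l : 1 <= l <= (size sigma).+1 -> fits l ->
  en k (ext sigma l) = tau.
Proof.
move=> l_range l_fits; rewrite /en size_ext.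
have -> : (size sigma).+1 - k = w by lia.
apply: pat_window_eq => // i j ik jk.
have ext_window : forall i, i < k.-1 ->
    nth 0 (ext sigma l) (w + i) =
    nth 0 sigma (w + i) + (l <= nth 0 sigma (w + i)).
  by move=> i' i'k; rewrite nth_ext //; lia.
have ext_last : nth 0 (ext sigma l) (w + k.-1) = l.
  by rewrite -[RHS](last_ext sigma_perm l_range); congr nth; lia.
have tau_neq : forall j, j < k.-1 -> nth 0 tau j != r.
  move=> j' j'k.
  by rewrite nth_uniq ?is_perm_uniq ?tau_size //; try apply/eqP; lia.
have [i_lt|->] : i < k.-1 \/ i = k.-1 by lia.
  have [j_lt|->] : j < k.-1 \/ j = k.-1 by lia.
    by rewrite !ext_window // shift_lt tau_window.
  by rewrite ext_window // ext_last shift_lt_l l_fits.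
have [j_lt|->] : j < k.-1 \/ j = k.-1 by lia.
  rewrite ext_last ext_window // l_lt_shift leqNgt l_fits //.
  by have := tau_neq j j_lt; case: ltngtP.
by rewrite ext_last !ltnn.
Qed.

(* Since tau
   avoids 312, the entries of tau below r are its first r - 1 entries; hence
   sigma up to position w + r - 2 lies below sigma from w + r - 1 on, so those
   first w + r - 1 entries are the values 1, ..., w + r - 1 and l = w + r
   works.  If r = 1, the value l = 1 works. *)
Lemma fitting_value_exists : exists l,
  [/\ 1 <= l <= (size sigma).+1, fits l & tail_above sigma l].
Proof.
have tau_below : forall i, i < k.-1 -> (nth 0 tau i < r) = (i < r.-1).
  by move=> i ik; apply: no312_below_last => //; lia.
have r_range : 1 <= r <= k.
  by move: (perm_nth_range (i := k.-1) tau_perm); rewrite tau_size; apply; lia.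
have sigma_range := perm_nth_range sigma_perm.
have [r_gt1|r_le1] := ltnP 1 r; last first.
  exists 1; split=> [|i ik|i j _ js _]; first lia.
    by rewrite tau_below //; have := sigma_range (w + i); lia.
  exact: (andP (sigma_range j js)).1.
have pivot_below : forall h, w + (r - 2) < h -> h < size sigma ->
    nth 0 sigma (w + (r - 2)) < nth 0 sigma h.
  move=> h rh hs; have -> : h = w + (h - w) by lia.
  rewrite -tau_window; try lia.
  have := tau_below (r - 2); have := tau_below (h - w).
  rewrite !ltnNge; lia.
have sep : forall j h, j < w + r.-1 -> w + r.-1 <= h -> h < size sigma ->
    nth 0 sigma j < nth 0 sigma h.
  move=> j h jr rh hs.
  by apply: (no312_split sigma_av (is_perm_uniq sigma_perm) pivot_below); lia.
have prefix := perm_prefix_small (t := w + r.-1) sigma_perm ltac:(lia) sep.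
exists (w + r.-1).+1; split=> [|i ik|i j ij js].
- lia.
- by rewrite ltnS prefix ?tau_below //; lia.
- by rewrite !ltnNge !prefix //; lia.
Qed.

End FittingValue.

Lemma overlap_window (k : nat) (sigma pi pi' : seq nat) :
  0 < k -> k <= size sigma -> en k sigma = pi ->
  pat (iota 1 k.-1) pi' = pat (iota 2 k.-1) pi ->
  forall i j, i < k.-1 -> j < k.-1 ->
  (nth 0 pi' i < nth 0 pi' j) =
  (nth 0 sigma (size sigma - k.-1 + i) < nth 0 sigma (size sigma - k.-1 + j)).
Proof.
move=> k_gt0 k_le <- overlap i j ik jk.
have := congr1 (fun t => nth 0 t i < nth 0 t j) overlap => /=.
rewrite (@pat_window_lt _ 0) // (@pat_window_lt _ 1) // !add0n => ->.
have shift x : size sigma - k + (1 + x) = size sigma - k.-1 + x by lia.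
by rewrite /en pat_window_lt ?shift //; lia.
Qed.

Unset Implicit Arguments.

Theorem mainTheorem5 (k : nat) (sigma pi pi' : seq nat) :
  1 <= k ->
  Av312 sigma -> k <= size sigma ->
  Av312_k k pi -> en k sigma = pi ->
  Av312_k k pi' ->
  pat (iota 1 k.-1) pi' = pat (iota 2 k.-1) pi ->
  exists l : nat, 1 <= l <= (size sigma).+1 /\
    Av312 (ext sigma l) /\ en k (ext sigma l) = pi'.
Proof.
move=> k_gt0 sigma_Av k_le _ en_pi [pi'_size [pi'_perm /avoids312E pi'_av]].
move=> overlap.
have [sigma_perm /avoids312E sigma_av] := sigma_Av.
have window := overlap_window k_gt0 k_le en_pi overlap.
have [l [l_range l_fits l_above]] := fitting_value_exists k_gt0 k_le
  sigma_perm sigma_av pi'_size pi'_perm pi'_av window.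
exists l; split=> //; split; first exact: ext_Av312.
exact: en_ext_fits.
Qed.
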